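(* Let $\mathbf X$ be a label cover instance and $\mathcal M$ a minion. Then $\kappa_{\mathrm{arc}}(\mathbf X)\to\mathcal M$ if and only if $\mathbf X\to\omega(\mathcal M)$ (minions viewed as structures in the label cover signature).
   Context: Label cover. The label cover signature has a type $X$ for each finite set $X$ and a binary symbol $E_\pi$ of arity $(X,Y)$ for each map $\pi\colon X\to Y$ between finite sets. A homomorphism between structures of this signature is a type-preserving family of maps preserving every $E_\pi$. A label cover instance is a structure $\mathbf S$ of this signature with finitely many nonempty domains, all finite. Arc-consistency on label cover. For a label cover instance $\mathbf S$, let $D_v$ be the type of $v$. Set $\mathcal F_v=D_v$ for each element $v$; while something changes, for each constraint $(v,w)\in E_\pi^{\mathbf S}$ ($\pi\colon D_v\to D_w$), remove from $\mathcal F_w$ elements not in $\pi(\mathcal F_v)$ and remove from $\mathcal F_v$ elements $x$ with $\pi(x)\notin\mathcal F_w$. The output $\kappa_{\mathrm{arc}}(\mathbf S)$ is the label cover instance with an element $v$ of type $\mathcal F_v$ for each element $v$ of $\mathbf S$, and a constraint $(v,w)\in E_{\pi'}$ for each constraint $(v,w)\in E_\pi^{\mathbf S}$, where $\pi'=\pi|_{\mathcal F_v}\colon\mathcal F_v\to\mathcal F_w$. Minions. An (abstract) minion $\mathcal M$ assigns to each finite set $X$ a set $\mathcal M^{(X)}$, nonempty iff $X\ne\emptyset$, and to each map $\pi\colon X\to Y$ a map $\mathcal M^{(X)}\to\mathcal M^{(Y)}$, $f\mapsto f^\pi$, functorially (identities to identities, $(f^\sigma)^\pi=f^{\pi\circ\sigma}$).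 A minion $\mathcal M$ is viewed as the (infinite) structure in the label cover signature with domain $\mathcal M^{(X)}$ of type $X$ and $E_\pi=\{(f,f^\pi)\mid f\in\mathcal M^{(X)}\}$ for $\pi\colon X\to Y$. The minion $\omega(\mathcal M)$. $\omega(\mathcal M)^{(X)}=\{(Y,f)\mid Y\subseteq X,\ f\in\mathcal M^{(Y)}\}$, and for $\pi\colon X\to Y'$, $(Z,f)^\pi=(\pi(Z),f^{\pi|_Z})$, where $\pi|_Z\colon Z\to\pi(Z)$ is the restriction. *)

From mathcomp Require Import all_boot.
Set Implicit Arguments. Unset Strict Implicit. Unset Printing Implicit Defensive.

(* Finite sets are modelled by finTypes.  A subset A : {set X} is      *)
(* viewed as the finite set subT A = {x : X | x \in A}.                *)
Definition subT (X : finType) (A : {set X}) : finType :=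
  {x : X | x \in A}.

(* A structure in the label cover signature whose "domains" are given by
   a family sob X (for every finite set X) and whose relations are
   E_pi = {(f, smap pi f)} : this is how a minion is viewed as a structure. *)
Record mstruct := MStruct {
  sob : finType -> Type;
  smap : forall X Y : finType, (X -> Y) -> sob X -> sob Y }.

Record minion := Minion {
  mob : finType -> Type;
  mmap : forall X Y : finType, (X -> Y) -> mob X -> mob Y;
  mmap_ext : forall (X Y : finType) (p q : X -> Y) (f : mob X),
      (forall x, p x = q x) -> mmap p f = mmap q f;
  mmap_id : forall (X : finType) (f : mob X), mmap (fun x : X => x) f = f;
  mmap_comp : forall (X Y Z : finType) (s : X -> Y) (p : Y -> Z) (f : mob X),
      mmap p (mmap s f) = mmap (fun x => p (s x)) f;
  mob_nonempty : forall X : finType, inhabited (mob X) <-> inhabited X }.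

Definition minion_struct (M : minion) : mstruct := MStruct (@mmap M).
Coercion minion_struct : minion >-> mstruct.

(* Label cover instance: finitely many elements (the finType V), element
   v has type D v (a finite set), and (v,w) \in E_pi^S iff pi \in E v w
   (pi : D v -> D w, as a finite function). *)
Record lc_instance := LCInstance {
  lcV : finType;
  lcD : lcV -> finType;
  lcE : forall v w : lcV, {set {ffun lcD v -> lcD w}} }.

Definition lc_hom (S : lc_instance) (P : mstruct) : Prop :=
  exists h : forall v : lcV S, sob P (lcD v),
    forall (v w : lcV S) (p : {ffun lcD v -> lcD w}),
      p \in lcE v w -> h w = @smap P _ _ p (h v).

Section Arc.
Variable S : lc_instance.
Notation V := (lcV S).
Notation D := (@lcD S).
Notation E := (@lcE S).

Definition ac_step (F : forall v : V, {set D v}) : forall v : V, {set D v} :=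
  fun v => [set x in F v |
     [forall w : V, [forall p in E v w, (p : D v -> D w) x \in F w]] &&
     [forall u : V, [forall p in E u v, x \in (p : D u -> D v) @: F u]]].

(* Run the refinement until it stabilises; since every non-stable round
   removes at least one element, sum_v |D_v| rounds suffice. *)
Definition arcF : forall v : V, {set D v} :=
  iter (\sum_(v : V) #|D v|) ac_step (fun v => [set: D v]).

Definition kappa_arc : lc_instance :=
  @LCInstance V (fun v => subT (arcF v))
    (fun v w => [set p' : {ffun subT (arcF v) -> subT (arcF w)} |
        [exists p in E v w, [forall x, val (p' x) == p (val x)]]]).
End Arc.

Definition restr (X Y : finType) (p : X -> Y) (Z : {set X}) :
  subT Z -> subT (p @: Z) :=
  fun x => exist (fun y => y \in p @: Z) (p (val x)) (imset_f p (valP x)).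

Definition omega_ob (M : minion) (X : finType) : Type :=
  {Z : {set X} & mob M (subT Z)}.

Definition omega_map (M : minion) (X Y : finType) (p : X -> Y)
  (f : omega_ob M X) : omega_ob M Y :=
  existT (fun Z => mob M (subT Z)) (p @: projT1 f)
         (@mmap M _ _ (@restr X Y p (projT1 f)) (projT2 f)).

Definition omega (M : minion) : mstruct := MStruct (@omega_map M).

(* Arc consistency computes the largest family (F_v) of subdomains on which every
   constraint pi of X maps F_v onto F_w.  A homomorphism X -> omega(M) chooses for
   each v a subdomain Z_v with pi(Z_v) = Z_w for every constraint, so Z_v is a
   subset of F_v, and pushing its M-element forward along Z_v -> F_v gives a
   homomorphism kappa_arc(X) -> M.  Conversely, a homomorphism h : kappa_arc(X) -> M
   yields X -> omega(M), v |-> (F_v, h v), because pi(F_v) = F_w. *)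

From mathcomp Require Import all_boot.
From Stdlib Require Import FunctionalExtensionality.

Set Implicit Arguments. Unset Strict Implicit. Unset Printing Implicit Defensive.

Lemma iter_fixpoint (T : Type) (f : T -> T) (m : T -> nat) :
  (forall x, f x = x \/ (m (f x) < m x)%N) ->
  forall n x, (m x <= n)%N -> f (iter n f x) = iter n f x.
Proof.
move=> f_dec; elim=> [|n IHn] x mx_le_n.
  by case: (f_dec x) => // /leq_trans /(_ mx_le_n).
have [fx_x | mfx_lt] := f_dec x; first by rewrite iter_fix.
by rewrite iterSr; apply: IHn; rewrite -ltnS (leq_trans mfx_lt).
Qed.

Lemma family_subset_card_eq (I : finType) (T : I -> finType) (A B : forall i, {set T i}) :
  (forall i, A i \subset B i) ->
  (\sum_i #|B i| <= \sum_i #|A i|)%N -> A = B.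
Proof.
move=> sAB leBA.
have cardAB : forall i, true -> (#|A i| <= #|B i| ?= iff (#|A i| == #|B i|))%N.
  by move=> i _; apply/leqif_eq/subset_leq_card.
move: leBA; rewrite (geq_leqif (leqif_sum cardAB)) => /forall_inP eqAB.
apply: functional_extensionality_dep => i; apply/eqP.
by rewrite eqEcard sAB (eqP (eqAB i isT)) leqnn.
Qed.

Section ArcConsistency.
Variable S : lc_instance.
Notation V := (lcV S).
Notation D := (@lcD S).
Notation E := (@lcE S).

Definition arc_consistent (Z : forall v : V, {set D v}) : Prop :=
  forall v w (p : {ffun D v -> D w}), p \in E v w -> Z w = (p : D v -> D w) @: Z v.

Lemma ac_step_sub (F : forall v : V, {set D v}) v : ac_step F v \subset F v.
Proof. by apply/subsetP => x; rewrite inE => /andP[]. Qed.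

Lemma ac_step_fix_or_shrink (F : forall v : V, {set D v}) :
  ac_step F = F \/ (\sum_v #|ac_step F v| < \sum_v #|F v|)%N.
Proof.
case: leqP => [le_card | lt_card]; last by right.
by left; apply: family_subset_card_eq le_card; apply: ac_step_sub.
Qed.

Lemma ac_step_arcF : ac_step (@arcF S) = @arcF S.
Proof.
apply: (iter_fixpoint ac_step_fix_or_shrink).
by apply: leq_sum => v _; rewrite cardsT.
Qed.

Lemma arcF_map v w (p : {ffun D v -> D w}) x :
  p \in E v w -> x \in @arcF S v -> p x \in @arcF S w.
Proof.
move=> pE; rewrite -{1}ac_step_arcF inE.
by case/and3P => _ /forallP /(_ w) /forallP /(_ p) /implyP /(_ pE).
Qed.

Lemma arcF_consistent : arc_consistent (@arcF S).
Proof.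
move=> v w p pE; apply/eqP; rewrite eqEsubset; apply/andP; split.
  apply/subsetP => y; rewrite -{1}ac_step_arcF inE.
  by case/and3P => _ _ /forallP /(_ v) /forallP /(_ p) /implyP; apply.
by apply/subsetP => _ /imsetP[x xF ->]; apply: arcF_map.
Qed.

Lemma ac_step_sup (Z F : forall v : V, {set D v}) :
  arc_consistent Z -> (forall v, Z v \subset F v) -> forall v, Z v \subset ac_step F v.
Proof.
move=> Zc sZF v; apply/subsetP => x Zx; rewrite inE (subsetP (sZF v)) //=.
apply/andP; split; apply/forallP => u; apply/forallP => p; apply/implyP => pE.
  by apply: (subsetP (sZF u)); rewrite (Zc _ _ _ pE) imset_f.
by apply: (subsetP (imsetS _ (sZF u))); rewrite -(Zc _ _ _ pE).
Qed.

Lemma arc_consistent_sub_arcF (Z : forall v : V, {set D v}) :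
  arc_consistent Z -> forall v, Z v \subset @arcF S v.
Proof.
move=> Zc; rewrite /arcF; elim: (\sum_v _)%N => [|k IHk] v /=; first exact: subsetT.
exact: ac_step_sup Zc IHk v.
Qed.

Definition arc_restr v w (p : {ffun D v -> D w}) (pE : p \in E v w) :
  {ffun subT (@arcF S v) -> subT (@arcF S w)} :=
  [ffun x => exist _ (p (val x)) (arcF_map pE (valP x))].

Lemma arc_restr_kappa_arc_edge v w (p : {ffun D v -> D w}) (pE : p \in E v w) :
  arc_restr pE \in @lcE (kappa_arc S) v w.
Proof.
rewrite inE; apply/existsP; exists p; rewrite pE.
by apply/forallP => x; rewrite ffunE.
Qed.

Lemma kappa_arc_edge_restr v w (p' : {ffun subT (@arcF S v) -> subT (@arcF S w)}) :
  p' \in @lcE (kappa_arc S) v w ->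
  exists2 p : {ffun D v -> D w}, p \in E v w & forall x, val (p' x) = p (val x).
Proof.
rewrite inE => /existsP[p /andP[pE /forallP p'p]].
by exists p => // x; apply/eqP.
Qed.

End ArcConsistency.

Section Omega.
Variable M : minion.

Lemma omega_map_existT (X Y : finType) (p : X -> Y) (Z : {set X}) (Z' : {set Y})
    (p' : subT Z -> subT Z') (f : mob M (subT Z)) :
  Z' = p @: Z -> (forall x, val (p' x) = p (val x)) ->
  existT (fun A => mob M (subT A)) Z' (mmap p' f) = omega_map p (existT _ Z f).
Proof.
move=> defZ' p'p; subst Z'; congr existT.
by apply: mmap_ext => x; apply: val_inj; rewrite p'p.
Qed.

Definition subT_incl (X : finType) (A B : {set X}) (sAB : A \subset B) :
  subT A -> subT B :=
  fun x => exist _ (val x) (subsetP sAB _ (valP x)).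

Definition omega_incl (X : finType) (f : omega_ob M X) (B : {set X})
    (sB : projT1 f \subset B) : mob M (subT B) :=
  mmap (subT_incl sB) (projT2 f).

Lemma omega_incl_eq (X : finType) (f g : omega_ob M X) (B : {set X}) :
  f = g -> forall (sfB : projT1 f \subset B) (sgB : projT1 g \subset B),
  omega_incl sfB = omega_incl sgB.
Proof. by move=> <- sfB sgB; apply: mmap_ext => x; apply: val_inj. Qed.

Lemma omega_incl_map (X Y : finType) (p : X -> Y) (f : omega_ob M X)
    (A : {set X}) (B : {set Y}) (sA : projT1 f \subset A)
    (sB : p @: projT1 f \subset B) (p' : subT A -> subT B) :
  (forall x, val (p' x) = p (val x)) ->
  omega_incl (f := omega_map p f) sB = mmap p' (omega_incl sA).
Proof.
move=> p'p; rewrite /omega_incl /= !mmap_comp.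
by apply: mmap_ext => x; apply: val_inj; rewrite p'p.
Qed.

End Omega.

Lemma kappa_arc_hom_omega (S : lc_instance) (M : minion) :
  lc_hom (kappa_arc S) M -> lc_hom S (omega M).
Proof.
case=> h hE; exists (fun v => existT _ (@arcF S v) (h v)) => v w p pE.
rewrite (hE _ _ _ (arc_restr_kappa_arc_edge pE)).
by apply: omega_map_existT; [apply: arcF_consistent | move=> x; rewrite ffunE].
Qed.

Lemma omega_hom_kappa_arc (S : lc_instance) (M : minion) :
  lc_hom S (omega M) -> lc_hom (kappa_arc S) M.
Proof.
case=> g gE.
have Zc : arc_consistent (fun v => projT1 (g v)) by move=> v w p /gE ->.
have sZF := arc_consistent_sub_arcF Zc.
exists (fun v => omega_incl (sZF v)) => v w p' /kappa_arc_edge_restr[p pE p'p].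
have sZFw : p @: projT1 (g v) \subset @arcF S w by rewrite -(Zc _ _ _ pE).
by rewrite (omega_incl_eq (gE _ _ _ pE) (sZF w) sZFw) (omega_incl_map (sZF v) sZFw p'p).
Qed.

Theorem mainTheorem14 (X : lc_instance) (M : minion) :
  lc_hom (kappa_arc X) M <-> lc_hom X (omega M).
Proof.
split; [exact: kappa_arc_hom_omega | exact: omega_hom_kappa_arc].
Qed.
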